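(* Let $\epsilon>0$, $\beta\ge 0$, let $M\ge 4$ be an even integer and $N\ge 3$ an integer, and let $\mathcal A$ be the upwind Shishkin-mesh matrix described in the context. Then all nonzero $(N-1)\times(N-1)$ blocks of $\mathcal A$ (namely $A_H,A,A_h,B_H,B,B_h,C_H,C,C_h$) are nonsingular. Moreover, with respect to the matrix $\infty$-norm, \[ \|A_H^{-1}B_H\|_\infty+\|A_H^{-1}C_H\|_\infty\le 1,\quad \|A^{-1}B\|_\infty+\|A^{-1}C\|_\infty\le 1,\quad \|A_h^{-1}B_h\|_\infty+\|A_h^{-1}C_h\|_\infty\le 1, \] and \[ \|B_HA_H^{-1}\|_\infty+\|C_HA_H^{-1}\|_\infty\le 1,\quad \|B_hA_h^{-1}\|_\infty+\|C_hA_h^{-1}\|_\infty\le 1. \]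
   Context: Setting (upwind finite differences on a Shishkin mesh for $-\epsilon\Delta u+u_y+\beta u=f$ on $(0,1)^2$ with Dirichlet data, lexicographic line ordering): let $\tau_y=\min\{1/2,\,2\epsilon\ln M\}$, $H_x=1/N$, $H_y=2(1-\tau_y)/M$, $h_y=2\tau_y/M$, and $m=M/2-1$. Define the scalars $d_H=-\frac{\epsilon}{H_y^2}-\frac1{H_y}$, $d=-\frac{2\epsilon}{H_y(H_y+h_y)}-\frac1{H_y}$, $d_h=-\frac{\epsilon}{h_y^2}-\frac1{h_y}$, $e_H=-\frac{\epsilon}{H_y^2}$, $e=-\frac{2\epsilon}{h_y(H_y+h_y)}$, $e_h=-\frac{\epsilon}{h_y^2}$, and $a_H=\frac{2\epsilon}{H_x^2}+\frac{2\epsilon}{H_y^2}+\frac1{H_y}+\beta$, $a=\frac{2\epsilon}{H_x^2}+\frac{2\epsilon}{H_yh_y}+\frac1{H_y}+\beta$, $a_h=\frac{2\epsilon}{H_x^2}+\frac{2\epsilon}{h_y^2}+\frac1{h_y}+\beta$. With $I$ the identity of size $N-1$, let $C_H=d_HI$, $C=dI$, $C_h=d_hI$, $B_H=e_HI$, $B=eI$, $B_h=e_hI$, and let $A_H$, $A$, $A_h$ be the $(N-1)\times(N-1)$ tridiagonal Toeplitz matrices with off-diagonal entries $-\epsilon/H_x^2$ (both sub- and superdiagonal) and diagonal entries $a_H$, $a$, $a_h$, respectively. Let $\hat A_H$ (resp. $\hat A_h$) be the $m\times m$ block tridiagonal matrix with diagonal blocks $A_H$ (resp. $A_h$), subdiagonal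 blocks $C_H$ (resp. $C_h$) and superdiagonal blocks $B_H$ (resp. $B_h$). Then $\mathcal A=\begin{bmatrix}\hat A_H & e_m\otimes B_H & 0\\ e_m^{T}\otimes C & A & e_1^{T}\otimes B\\ 0 & e_1\otimes C_h & \hat A_h\end{bmatrix}$ of size $(N-1)(M-1)$, where $e_1,e_m$ are the first and last canonical basis vectors of $\mathbb R^m$ and $\otimes$ is the Kronecker product. *)

From HB Require Import structures.
From mathcomp Require Import all_boot all_order all_algebra.
From mathcomp Require Import reals exp.
Set Implicit Arguments. Unset Strict Implicit. Unset Printing Implicit Defensive.
Import Order.TTheory GRing.Theory Num.Theory.
Local Open Scope ring_scope.

Section Shishkin.
Variable R : realType.

Definition mx_norm_inf (m n : nat) (A : 'M[R]_(m, n)) : R :=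
  \big[Num.max/0]_(i < m) \sum_(j < n) `|A i j|.

Definition tridiag (n : nat) (dg off : R) : 'M[R]_n :=
  \matrix_(i < n, j < n)
     if i == j then dg
     else if (i.+1 == j :> nat) || (j.+1 == i :> nat) then off else 0.

Variables (eps beta : R) (M N : nat).

Definition tau_y : R := Num.min (1 / 2) (2 * eps * ln (M%:R)).
Definition Hx : R := 1 / N%:R.
Definition Hy : R := 2 * (1 - tau_y) / M%:R.
Definition hy : R := 2 * tau_y / M%:R.

Definition d_H : R := - (eps / Hy ^+ 2) - 1 / Hy.
Definition d_ : R := - (2 * eps / (Hy * (Hy + hy))) - 1 / Hy.
Definition d_h : R := - (eps / hy ^+ 2) - 1 / hy.
Definition e_H : R := - (eps / Hy ^+ 2).
Definition e_ : R := - (2 * eps / (hy * (Hy + hy))).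
Definition e_h : R := - (eps / hy ^+ 2).
Definition a_H : R := 2 * eps / Hx ^+ 2 + 2 * eps / Hy ^+ 2 + 1 / Hy + beta.
Definition a_ : R := 2 * eps / Hx ^+ 2 + 2 * eps / (Hy * hy) + 1 / Hy + beta.
Definition a_h : R := 2 * eps / Hx ^+ 2 + 2 * eps / hy ^+ 2 + 1 / hy + beta.

Definition offd : R := - (eps / Hx ^+ 2).

Definition blkA_H : 'M[R]_(N.-1) := tridiag N.-1 a_H offd.
Definition blkA : 'M[R]_(N.-1) := tridiag N.-1 a_ offd.
Definition blkA_h : 'M[R]_(N.-1) := tridiag N.-1 a_h offd.
Definition blkB_H : 'M[R]_(N.-1) := e_H%:M.
Definition blkB : 'M[R]_(N.-1) := e_%:M.
Definition blkB_h : 'M[R]_(N.-1) := e_h%:M.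
Definition blkC_H : 'M[R]_(N.-1) := d_H%:M.
Definition blkC : 'M[R]_(N.-1) := d_%:M.
Definition blkC_h : 'M[R]_(N.-1) := d_h%:M.

End Shishkin.

(* Every diagonal block A_H, A, A_h is a tridiagonal matrix whose diagonal exceeds the sum of
   its off-diagonal entries by a margin delta, and a row-wise maximum argument gives
   ||A^-1||_oo <= 1/delta for such strictly diagonally dominant matrices. Since B and C are
   scalar matrices e I and d I, all four norm sums reduce to (|e| + |d|) / delta, and for each
   block the margin is 2 eps / Hy^2 + 1 / Hy + beta (resp. with hy, or 2 eps / (Hy hy)), which is
   exactly |e| + |d| + beta: the rows of the full upwind matrix have sum beta >= 0. *)
From HB Require Import structures.
From mathcomp Require Import all_boot all_order all_algebra.
From mathcomp Require Import ring lra.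
From mathcomp Require Import reals exp.
Import Order.TTheory GRing.Theory Num.Theory.
Local Open Scope ring_scope.

Section DiagonalDominance.
Context {R : realType}.

Definition diag_dominant_by {n} (A : 'M[R]_n) (delta : R) :=
  forall i, delta + \sum_(j | j != i) `|A i j| <= `|A i i|.

Lemma row_sum_le_mx_norm_inf {m n} (X : 'M[R]_(m, n)) i :
  \sum_j `|X i j| <= mx_norm_inf X.
Proof. by rewrite /mx_norm_inf (bigD1 i) //= le_max lexx. Qed.

Lemma mx_norm_inf_ge0 {m n} (X : 'M[R]_(m, n)) : 0 <= mx_norm_inf X.
Proof.
rewrite /mx_norm_inf; elim/big_ind: _ => // [x y x0 _|i _]; first by rewrite le_max x0.
exact: sumr_ge0.
Qed.

Lemma mx_norm_inf_le {m n} (X : 'M[R]_(m, n)) c :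
  0 <= c -> (forall i, \sum_j `|X i j| <= c) -> mx_norm_inf X <= c.
Proof.
move=> c_ge0 rowX; rewrite /mx_norm_inf.
by elim/big_ind: _ => // x y xc yc; rewrite ge_max xc yc.
Qed.

Lemma mx_norm_infZ_le {m n} (a : R) (X : 'M[R]_(m, n)) :
  mx_norm_inf (a *: X) <= `|a| * mx_norm_inf X.
Proof.
apply: mx_norm_inf_le => [|i].
  by rewrite mulr_ge0 ?mx_norm_inf_ge0.
under eq_bigr => j _ do rewrite mxE normrM.
by rewrite -mulr_sumr ler_wpM2l ?row_sum_le_mx_norm_inf.
Qed.

Section Dominant.
Context {n : nat} {A : 'M[R]_n} {delta : R}.
Hypotheses (delta_gt0 : 0 < delta) (domA : diag_dominant_by A delta).

(* Evaluate row i of A y at an index i where |y i| is maximal. *)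
Lemma dominant_mulmx_lower_bound (y : 'cV_n) c :
  (forall i, `|(A *m y) i 0| <= c) -> forall k, delta * `|y k 0| <= c.
Proof.
move=> Ay_le k.
have [i _ y_max] := @arg_maxP _ R _ k xpredT (fun i => `|y i 0|) isT.
apply: le_trans (Ay_le i); rewrite mxE (bigD1 i) //=.
apply: le_trans (lerB_normD _ _).
set S := \sum_(j | j != i) `|A i j|.
have off_le : `|\sum_(j | j != i) A i j * y j 0| <= S * `|y i 0|.
  apply: le_trans (ler_norm_sum _ _ _) _.
  rewrite mulr_suml; apply: ler_sum => j _.
  by rewrite normrM ler_wpM2l //; apply: y_max.
have k_le_i : delta * `|y k 0| <= delta * `|y i 0|
  by rewrite ler_wpM2l ?(ltW delta_gt0) //; apply: y_max.
have diag_ge : (delta + S) * `|y i 0| <= `|A i i| * `|y i 0|.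
  by rewrite ler_wpM2r //; apply: domA.
rewrite normrM; move: diag_ge; rewrite mulrDl; lra.
Qed.

Lemma dominant_unitmx : A \in unitmx.
Proof.
rewrite -unitmx_tr unitmxE unitfE; apply/negP => /det0P [v v_neq0 vA0].
have Av0 : A *m v^T = 0 by rewrite -[A]trmxK -trmx_mul vA0 trmx0.
move/negP: v_neq0; apply; apply/eqP/matrixP => a b; rewrite !mxE (ord1 a).
have : delta * `|v^T b 0| <= 0.
  by apply: dominant_mulmx_lower_bound => i; rewrite Av0 mxE normr0.
by rewrite mxE pmulr_rle0 // normr_le0 => /eqP.
Qed.

(* Apply the lower bound to y = A^-1 x, where x is the sign vector of row i of A^-1. *)
Lemma dominant_invmx_row_sum_le i : \sum_j `|invmx A i j| <= delta^-1.
Proof.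
pose x : 'cV[R]_n := \col_j (if 0 <= invmx A i j then 1 else -1).
have x_le1 j : `|x j 0| <= 1 by rewrite mxE; case: ifP; rewrite ?normrN normr1.
have Ay_x : A *m (invmx A *m x) = x by rewrite mulmxA mulmxV ?dominant_unitmx ?mul1mx.
have := @dominant_mulmx_lower_bound (invmx A *m x) 1; rewrite Ay_x => /(_ x_le1 i).
have -> : (invmx A *m x) i 0 = \sum_j `|invmx A i j|.
  rewrite mxE; apply: eq_bigr => j _; rewrite mxE.
  case: ifP => [sg|/negbT]; first by rewrite mulr1 ger0_norm.
  by rewrite -ltNge mulrN1 => /ltW/ler0_norm ->.
rewrite ger0_norm ?sumr_ge0 // => row_le.
by rewrite -(ler_pM2l delta_gt0) mulfV ?gt_eqF.
Qed.

Lemma dominant_mx_norm_inf_invmx : mx_norm_inf (invmx A) <= delta^-1.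
Proof.
apply: mx_norm_inf_le; first by rewrite invr_ge0 ltW.
exact: dominant_invmx_row_sum_le.
Qed.

Lemma dominant_scalar_norm_sum (e d : R) :
  `|e| + `|d| <= delta ->
  mx_norm_inf (e *: invmx A) + mx_norm_inf (d *: invmx A) <= 1.
Proof.
move=> ed_le; have inv_ge0 : 0 <= delta^-1 by rewrite invr_ge0 ltW.
have norm_le a : mx_norm_inf (a *: invmx A) <= `|a| * delta^-1.
  by apply: le_trans (mx_norm_infZ_le _ _) _; rewrite ler_wpM2l ?dominant_mx_norm_inf_invmx.
apply: le_trans (lerD (norm_le e) (norm_le d)) _.
by rewrite -mulrDl -(mulfV (lt0r_neq0 delta_gt0)) ler_wpM2r.
Qed.

End Dominant.

Lemma sum_indicator_le1 n (P : 'I_n -> bool) :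
  (forall j1 j2, P j1 -> P j2 -> j1 = j2) -> \sum_j ((P j)%:R : R) <= 1.
Proof.
move=> P_single; case: (pickP P) => [j0 Pj0 | P0]; last by rewrite big1 // => j _; rewrite P0.
rewrite (bigD1 j0) //= Pj0 big1 ?addr0 // => j j_neq.
by case Pj: (P j) => //; rewrite (P_single _ _ Pj Pj0) eqxx in j_neq.
Qed.

Lemma tridiag_dominant n (a off : R) :
  diag_dominant_by (tridiag n a off) (`|a| - 2 * `|off|).
Proof.
move=> i; rewrite mxE eqxx.
pose G (j : 'I_n) := `|off| * ((i.+1 == j :> nat)%:R + (j.+1 == i :> nat)%:R).
have offdiag_le : \sum_(j | j != i) `|tridiag n a off i j| <= \sum_j G j.
  rewrite big_mkcond; apply: ler_sum => j _; case: ifP => [ji|_]; last first.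
    by rewrite mulr_ge0 // addr_ge0.
  rewrite mxE eq_sym (negbTE ji) /G.
  case: (i.+1 == j :> nat); case: (j.+1 == i :> nat);
    rewrite /= ?normr0 ?mulr1n ?mulr0n ?addr0 ?add0r ?mulr1 ?mulr0 //.
  by have := normr_ge0 off; lra.
have neighbours_le : \sum_j G j <= 2 * `|off|.
  rewrite /G -mulr_sumr big_split /= mulrC ler_wpM2r // [2]/(1 + 1).
  apply: lerD; apply: sum_indicator_le1 => j1 j2 /eqP h1 /eqP h2; apply: val_inj.
    by rewrite /= -h1 -h2.
  by apply: succn_inj; rewrite h1 h2.
lra.
Qed.

Lemma tridiag_scalar_blocks n {a off e d : R} :
  `|e| + `|d| <= a - 2 * `|off| -> e != 0 -> d != 0 ->
  let A := tridiag n a off in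
  [/\ A \in unitmx, (e%:M : 'M_n) \in unitmx, (d%:M : 'M_n) \in unitmx,
      mx_norm_inf (invmx A *m e%:M) + mx_norm_inf (invmx A *m d%:M) <= 1 &
      mx_norm_inf (e%:M *m invmx A) + mx_norm_inf (d%:M *m invmx A) <= 1].
Proof.
move=> ed_le e_neq0 d_neq0 A.
have {}ed_le : `|e| + `|d| <= `|a| - 2 * `|off|.
  by apply: le_trans ed_le _; rewrite lerD2r real_ler_norm ?num_real.
have margin_gt0 : 0 < `|a| - 2 * `|off|.
  by apply: lt_le_trans ed_le; rewrite ltr_wpDr ?normr_gt0.
have domA := tridiag_dominant n a off.
have scalar_unit (c : R) : c != 0 -> (c%:M : 'M_n) \in unitmx.
  by move=> c_neq0; rewrite unitmxE det_scalar unitfE expf_neq0.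
split; rewrite ?scalar_unit ?mul_mx_scalar ?mul_scalar_mx //.
- exact: dominant_unitmx margin_gt0 domA.
- exact: dominant_scalar_norm_sum margin_gt0 domA _ _ ed_le.
- exact: dominant_scalar_norm_sum margin_gt0 domA _ _ ed_le.
Qed.

End DiagonalDominance.

Section ShishkinCoefficients.
Context {R : realType} {eps : R} (beta : R) {M N : nat}.
Hypotheses (eps_gt0 : 0 < eps) (M_gt1 : (1 < M)%N) (N_gt0 : (0 < N)%N).

Lemma tau_y_gt0 : 0 < tau_y eps M.
Proof.
rewrite /tau_y lt_min; apply/andP; split; first by lra.
by rewrite !mulr_gt0 // ln_gt0 // ltr1n.
Qed.

Lemma Hy_gt0 : 0 < Hy eps M.
Proof.
have tau_le : tau_y eps M <= 1 / 2 by rewrite /tau_y ge_min lexx.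
by rewrite /Hy divr_gt0 ?ltr0n ?(ltnW M_gt1) // mulr_gt0 //; lra.
Qed.

Lemma hy_gt0 : 0 < hy eps M.
Proof. by rewrite /hy divr_gt0 ?ltr0n ?(ltnW M_gt1) // mulr_gt0 ?tau_y_gt0. Qed.

Lemma Hx_gt0 : 0 < Hx R N.
Proof. by rewrite /Hx divr_gt0 ?ltr0n. Qed.

Lemma offd_norm : `|offd eps N| = eps / Hx R N ^+ 2.
Proof. by rewrite /offd normrN gtr0_norm // divr_gt0 ?exprn_gt0 ?Hx_gt0. Qed.

Lemma e_H_lt0 : e_H eps M < 0.
Proof. by rewrite /e_H oppr_lt0 divr_gt0 ?exprn_gt0 ?Hy_gt0. Qed.

Lemma d_H_lt0 : d_H eps M < 0.
Proof.
have := e_H_lt0; have := divr_gt0 ltr01 Hy_gt0; rewrite /e_H /d_H; lra.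
Qed.

Lemma e_lt0 : e_ eps M < 0.
Proof.
rewrite /e_ oppr_lt0; apply: divr_gt0; first by rewrite mulr_gt0.
exact: mulr_gt0 hy_gt0 (addr_gt0 Hy_gt0 hy_gt0).
Qed.

Lemma d_lt0 : d_ eps M < 0.
Proof.
have pos : 0 < 2 * eps / (Hy eps M * (Hy eps M + hy eps M)).
  apply: divr_gt0; first by rewrite mulr_gt0.
  exact: mulr_gt0 Hy_gt0 (addr_gt0 Hy_gt0 hy_gt0).
have := divr_gt0 ltr01 Hy_gt0; rewrite /d_; lra.
Qed.

Lemma e_h_lt0 : e_h eps M < 0.
Proof. by rewrite /e_h oppr_lt0 divr_gt0 ?exprn_gt0 ?hy_gt0. Qed.

Lemma d_h_lt0 : d_h eps M < 0.
Proof.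
have := e_h_lt0; have := divr_gt0 ltr01 hy_gt0; rewrite /e_h /d_h; lra.
Qed.

Lemma a_H_margin :
  `|e_H eps M| + `|d_H eps M| + beta = a_H eps beta M N - 2 * `|offd eps N|.
Proof.
rewrite ltr0_norm ?e_H_lt0 // ltr0_norm ?d_H_lt0 // offd_norm /e_H /d_H /a_H.
by field; rewrite !gt_eqF ?Hy_gt0 ?Hx_gt0.
Qed.

Lemma a_margin :
  `|e_ eps M| + `|d_ eps M| + beta = a_ eps beta M N - 2 * `|offd eps N|.
Proof.
rewrite ltr0_norm ?e_lt0 // ltr0_norm ?d_lt0 // offd_norm /e_ /d_ /a_.
by field; rewrite !gt_eqF ?addr_gt0 ?Hy_gt0 ?hy_gt0 ?Hx_gt0.
Qed.

Lemma a_h_margin :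
  `|e_h eps M| + `|d_h eps M| + beta = a_h eps beta M N - 2 * `|offd eps N|.
Proof.
rewrite ltr0_norm ?e_h_lt0 // ltr0_norm ?d_h_lt0 // offd_norm /e_h /d_h /a_h.
by field; rewrite !gt_eqF ?hy_gt0 ?Hx_gt0.
Qed.

End ShishkinCoefficients.

Theorem lemma5p1 (R : realType) (eps beta : R) (M N : nat) :
  0 < eps -> 0 <= beta -> ~~ odd M -> (4 <= M)%N -> (3 <= N)%N ->
  let AH := blkA_H eps beta M N in
  let A  := blkA eps beta M N in
  let Ah := blkA_h eps beta M N in
  let BH := blkB_H eps M N in
  let B  := blkB eps M N in
  let Bh := blkB_h eps M N in
  let CH := blkC_H eps M N in
  let C  := blkC eps M N in
  let Ch := blkC_h eps M N in
  [/\ [/\ AH \in unitmx, A \in unitmx & Ah \in unitmx],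
      [/\ BH \in unitmx, B \in unitmx & Bh \in unitmx],
      [/\ CH \in unitmx, C \in unitmx & Ch \in unitmx],
      [/\ mx_norm_inf (invmx AH *m BH) + mx_norm_inf (invmx AH *m CH) <= 1,
          mx_norm_inf (invmx A *m B) + mx_norm_inf (invmx A *m C) <= 1 &
          mx_norm_inf (invmx Ah *m Bh) + mx_norm_inf (invmx Ah *m Ch) <= 1] &
      mx_norm_inf (BH *m invmx AH) + mx_norm_inf (CH *m invmx AH) <= 1 /\
      mx_norm_inf (Bh *m invmx Ah) + mx_norm_inf (Ch *m invmx Ah) <= 1].
Proof.
move=> eps_gt0 beta_ge0 _ M_ge4 N_ge3; cbv zeta.
have M_gt1 : (1 < M)%N by apply: leq_trans M_ge4.
have N_gt0 : (0 < N)%N by apply: leq_trans N_ge3.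
have margin_le (x a : R) : x + beta = a -> x <= a by move=> <-; rewrite lerDl.
have [AH_unit BH_unit CH_unit AHB AHC] := tridiag_scalar_blocks N.-1
  (margin_le _ _ (a_H_margin beta eps_gt0 M_gt1 N_gt0))
  (ltr0_neq0 (e_H_lt0 eps_gt0 M_gt1)) (ltr0_neq0 (d_H_lt0 eps_gt0 M_gt1)).
have [A_unit B_unit C_unit AB AC] := tridiag_scalar_blocks N.-1
  (margin_le _ _ (a_margin beta eps_gt0 M_gt1 N_gt0))
  (ltr0_neq0 (e_lt0 eps_gt0 M_gt1)) (ltr0_neq0 (d_lt0 eps_gt0 M_gt1)).
have [Ah_unit Bh_unit Ch_unit AhB AhC] := tridiag_scalar_blocks N.-1
  (margin_le _ _ (a_h_margin beta eps_gt0 M_gt1 N_gt0))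
  (ltr0_neq0 (e_h_lt0 eps_gt0 M_gt1)) (ltr0_neq0 (d_h_lt0 eps_gt0 M_gt1)).
by rewrite /blkA_H /blkA /blkA_h /blkB_H /blkB /blkB_h /blkC_H /blkC /blkC_h.
Qed.
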